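(* Let $G_0=(V,E_0)$ and $G_1=(V,E_1)$ be strongly connected unweighted directed graphs on the same $n$-vertex set, let $n_p,n_q\ge1$ be integers, let $S_1\subseteq V$ with $|S_1|=n_p$, let $a\in V$, and let $S_2=N^{in}_{G_0}(a,n_q)$. Let $\ell_0=\max_{x\in V}d_{G_0}(S_1,x)$, let $\epsilon\in[0,1/2]$, and suppose that both $\max_{x\in V}d_{G_1}(S_1,x)$ and $d_{G_1}(S_1,a)$ lie in $[\ell_0(1-\epsilon),\ell_0(1+\epsilon)]$, and that $S_1\cap S_2\neq\emptyset$. Write $\delta=\mathrm{inecc}_{G_1}(a)$. Suppose moreover that either (i) $E_1\subseteq E_0$ and $d_{G_0}(S_1,a)\ge(1-\epsilon)\ell_0$; or (ii) $E_0\subseteq E_1$ and $\mathrm{inecc}_{G_1}(a)\ge(1-\epsilon)\,\mathrm{inecc}_{G_0}(a)$. Then for all reals $p,q>0$ with $p+q=1$, in the graph $G_1$ either $d_{G_1}(S_1,x)\le\lfloor(p+2\epsilon)\delta\rfloor$ for every $x\in V$, or $d_{G_1}(x,S_2)\le\lceil(q+2\epsilon)\delta\rceil$ for every $x\in V$.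
   Context: $d_G(u,v)$ is the directed shortest-path distance in $G$; $d_G(A,u)=\min_{v\in A}d_G(v,u)$, $d_G(u,A)=\min_{v\in A}d_G(u,v)$; $\mathrm{inecc}_G(a)=\max_{x}d_G(x,a)$. $N^{in}_G(a,\ell)$ denotes a set of $\ell$ vertices $x$ with the smallest values of $d_G(x,a)$ (ties broken arbitrarily), i.e. the $\ell$ closest incoming vertices of $a$. *)

From HB Require Import structures.
From mathcomp Require Import all_boot all_order all_algebra.
Set Implicit Arguments. Unset Strict Implicit. Unset Printing Implicit Defensive.

Definition walkn (T : finType) (e : rel T) (k : nat) (x y : T) : bool :=
  [exists p : k.-tuple T, path e x p && (last x p == y)].

(* A shortest walk, if any, has fewer than #|T| edges, so we search
   k in [0, #|T|); the value #|T| is returned only when y is unreachable from x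
   (never the case in the strongly connected graphs considered). *)
Definition dist (T : finType) (e : rel T) (x y : T) : nat :=
  find (fun k => walkn e k x y) (iota 0 #|T|).

Definition strongly_connected (T : finType) (e : rel T) : Prop :=
  forall x y : T, connect e x y.

Definition dist_from_set (T : finType) (e : rel T) (A : {set T}) (u : T) : nat :=
  \big[minn/#|T|]_(v in A) dist e v u.
Definition dist_to_set (T : finType) (e : rel T) (u : T) (A : {set T}) : nat :=
  \big[minn/#|T|]_(v in A) dist e u v.

Definition inecc (T : finType) (e : rel T) (a : T) : nat := \max_(x : T) dist e x a.

(* S is a valid choice of N^in_e(a,l): l vertices with the smallest values of
   d(x,a), ties broken arbitrarily. *)
Definition is_Nin (T : finType) (e : rel T) (a : T) (l : nat) (S : {set T}) : Prop :=
  #|S| = l /\ forall x y : T, x \in S -> y \notin S -> dist e x a <= dist e y a.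

From HB Require Import structures.
From mathcomp Require Import all_boot all_order all_algebra.
From mathcomp Require Import zify lra.
Import Order.TTheory GRing.Theory Num.Theory.

Set Implicit Arguments.
Unset Strict Implicit.

(* Pick s in S1 :&: S2 and put D := d_0(s, a).  Every vertex y with
   d_0(y, a) < D lies in S2, so a shortest walk from x to a, taken in a graph
   contained in both G0 and G1 (G1 in case (i), G0 in case (ii)), enters S2
   within d(x, a) + 1 - D steps.  If some vertex is farther than
   (p + 2 eps) delta from S1, then l0 is large, hence so is D >= (1 - eps) l0,
   and d(x, a) + 1 - D stays below (q + 2 eps) delta + 1. *)

(* minn has no unit in nat; this instance lets bigD1 act on the minima in
   dist_from_set and dist_to_set. *)
HB.instance Definition _ := SemiGroup.isComLaw.Build nat minn minnA minnC.

Section Walks.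
Variable T : finType.
Implicit Types (e g : rel T) (x y z : T) (A : {set T}).

Lemma walknP e k x y :
  reflect (exists p : seq T, [/\ size p = k, path e x p & last x p = y])
          (walkn e k x y).
Proof.
apply: (iffP existsP) => [[p /andP[hp /eqP hl]] | [p [hs hp hl]]].
- by exists (tval p); rewrite size_tuple.
- have hs' : size p == k by apply/eqP.
  by exists (Tuple hs'); rewrite /= hp hl eqxx.
Qed.

Lemma dist_min e k x y : walkn e k x y -> dist e x y <= k.
Proof.
move=> w; rewrite /dist; case: (ltnP k #|T|) => hk.
- rewrite leqNgt; apply/negP => hf.
  by have := before_find 0 hf; rewrite nth_iota // add0n w.
- by apply: leq_trans hk; rewrite -[X in _ <= X](size_iota 0) find_size.
Qed.

Lemma walkn_dist e x y : connect e x y -> walkn e (dist e x y) x y.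
Proof.
move/connectP=> [p hp ->]; case/shortenP: hp => p' hp' hu _.
have hw : walkn e (size p') x (last x p') by apply/walknP; exists p'.
have hs : size p' < #|T|.
  by have := max_card (mem (x :: p')); rewrite (card_uniqP hu).
have hh : has (fun k => walkn e k x (last x p')) (iota 0 #|T|).
  by apply/hasP; exists (size p'); rewrite // mem_iota.
have := hh; rewrite has_find size_iota => hf.
by have := nth_find 0 hh; rewrite /dist nth_iota ?add0n.
Qed.

Lemma walkn_sub e g k x y : subrel e g -> walkn e k x y -> walkn g k x y.
Proof.
move=> eg /walknP[p [hs hp hl]]; apply/walknP; exists p; split => //.
exact: sub_path hp.
Qed.

Lemma dist_sub e g x y : subrel e g -> connect e x y -> dist g x y <= dist e x y.
Proof. by move=> eg /walkn_dist w; exact: dist_min (walkn_sub eg w). Qed.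

Lemma walkn_split e k j x y : j <= k -> walkn e k x y ->
  exists2 z, walkn e (k - j) x z & walkn e j z y.
Proof.
move=> hj /walknP[p [hs hp hl]]; rewrite -(cat_take_drop (k - j) p) in hp hl.
move: hp; rewrite cat_path => /andP[hp1 hp2].
exists (last x (take (k - j) p)); apply/walknP.
- by exists (take (k - j) p); rewrite size_takel // hs leq_subr.
- by exists (drop (k - j) p); rewrite size_drop hs subKn // -last_cat.
Qed.

Lemma dist_from_set_le e A u v : v \in A -> dist_from_set e A u <= dist e v u.
Proof. by move=> vA; rewrite /dist_from_set (bigD1 v) //= geq_minl. Qed.

Lemma dist_to_set_le e A u v : v \in A -> dist_to_set e u A <= dist e u v.
Proof. by move=> vA; rewrite /dist_to_set (bigD1 v) //= geq_minl. Qed.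

Lemma dist_from_set_sub e g A u : subrel e g -> strongly_connected e ->
  dist_from_set g A u <= dist_from_set e A u.
Proof.
move=> eg sc; apply: (big_ind2 (fun m n => m <= n)) => // [m1 n1 m2 n2 *|v _].
- lia.
- exact: dist_sub.
Qed.

Lemma dist_le_inecc e x a : dist e x a <= inecc e a.
Proof. exact: (leq_bigmax (F := fun y => dist e y a)). Qed.

Lemma Nin_ball e a l S s y :
  is_Nin e a l S -> s \in S -> dist e y a < dist e s a -> y \in S.
Proof.
move=> [_ hS] sS lt_ys; apply/contraT => yS.
by have := hS s y sS yS; rewrite leqNgt lt_ys.
Qed.

(* Cut a shortest g-walk from x to a at min(d_g(x, a), D - 1) steps before a:
   that vertex is within D - 1 of a in e0, hence in S. *)
Lemma dist_to_Nin_le e0 g e a l S s x :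
  is_Nin e0 a l S -> s \in S -> subrel g e0 -> subrel g e ->
  connect g x a -> 0 < dist e0 s a ->
  dist_to_set e x S <= (dist g x a).+1 - dist e0 s a.
Proof.
move=> hS sS ge0 ge gxa D_gt0; set D := dist e0 s a; set k := dist g x a.
have [z w_xz w_za] := walkn_split (geq_minl k D.-1) (walkn_dist gxa).
have zS : z \in S.
  apply: Nin_ball hS sS _; apply: leq_ltn_trans (dist_min (walkn_sub ge0 w_za)) _.
  by apply: leq_ltn_trans (geq_minr _ _) _; rewrite ltn_predL.
apply: leq_trans (dist_to_set_le e x zS) _.
apply: leq_trans (dist_min (walkn_sub ge w_xz)) _; lia.
Qed.

End Walks.

Section Arithmetic.
Variable R : archiRealFieldType.
Local Open Scope ring_scope.
Implicit Types (eps p q l D d c r : R).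

Lemma ceil_ge_nat (m : nat) r : m%:R - 1 < r -> m%:Z <= Num.ceil r.
Proof.
move=> h; have := ceil_gt_int r (m%:Z - 1).
by rewrite rmorphB /= h ltrBlDr ltzD1.
Qed.

Lemma ceil_ge_truncated_sub (m k D : nat) r : (m <= k.+1 - D)%N ->
  0 <= r -> k%:R - D%:R < r -> m%:Z <= Num.ceil r.
Proof.
move=> hm r_ge0 hr; apply: ceil_ge_nat.
have [->|m_gt0] := posnP m; first by rewrite mulr0n; lra.
have : (m + D <= k + 1)%N by lia.
by rewrite -(ler_nat R) !natrD; lra.
Qed.

(* [d] is delta, [l] is l0 and [D] is d_0(s, a); the hypothesis bounding
   (p + 2 eps) d is what a vertex farther than (p + 2 eps) delta from S1 gives. *)
Lemma gap_subgraph eps p q l D d :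
  0 <= eps <= 1 / 2 -> 0 < p -> 0 < q -> p + q = 1 -> 0 <= d ->
  (p + 2 * eps) * d < (1 + eps) * l -> (1 - eps) * l <= D ->
  0 < D /\ d - D < (q + 2 * eps) * d.
Proof.
move=> /andP[eps_ge0 eps_le] p_gt0 q_gt0 pq d_ge0 far near.
have l_gt0 : 0 < l by nra.
split; first by nra.
have : 0 <= eps * (2 - p) * d by rewrite !mulr_ge0 //; lra.
nra.
Qed.

(* As above, with [c] = inecc_{G0}(a). *)
Lemma gap_supergraph eps p q l D d c :
  0 <= eps <= 1 / 2 -> 0 < p -> 0 < q -> p + q = 1 -> 0 <= d ->
  (p + 2 * eps) * d < l -> (1 - eps) * l <= D -> (1 - eps) * c <= d ->
  0 < D /\ c - D < (q + 2 * eps) * d.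
Proof.
move=> /andP[eps_ge0 eps_le] p_gt0 q_gt0 pq d_ge0 far near ecc.
have l_gt0 : 0 < l by nra.
split; first by nra.
have far1 : (1 - eps) * ((p + 2 * eps) * d) < D.
  by apply: lt_le_trans near; rewrite ltr_pM2l //; lra.
have far2 : (1 - eps) * ((1 - eps) * ((p + 2 * eps) * d)) < (1 - eps) * D.
  by rewrite ltr_pM2l //; lra.
have slack : 0 <= eps * ((4 - p - 2 * eps) * (1 - eps) - 1) * d.
  by rewrite !mulr_ge0 //; nra.
have : (1 - eps) * (c - D) < (1 - eps) * ((q + 2 * eps) * d) by nra.
rewrite ltr_pM2l //; lra.
Qed.

End Arithmetic.

Lemma dist_to_Nin_ceil (R : archiRealFieldType) (T : finType) (e0 g e : rel T)
    (a s : T) (l : nat) (S : {set T}) (r : R) :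
  is_Nin e0 a l S -> s \in S -> subrel g e0 -> subrel g e ->
  strongly_connected g -> (0 < dist e0 s a)%N -> (0 <= r)%R ->
  ((inecc g a)%:R - (dist e0 s a)%:R < r)%R ->
  forall x, ((dist_to_set e x S)%:Z <= Num.ceil r)%R.
Proof.
move=> hS sS ge0 ge sc D_gt0 r_ge0 gap x.
apply: ceil_ge_truncated_sub (dist_to_Nin_le hS sS ge0 ge (sc x a) D_gt0) r_ge0 _.
by apply: le_lt_trans gap; rewrite lerB // ler_nat dist_le_inecc.
Qed.

Theorem lemma3p3 (R : archiRealFieldType) (T : finType) (e0 e1 : rel T)
  (np nq : nat) (S1 S2 : {set T}) (a : T) (eps : R) :
  strongly_connected e0 -> strongly_connected e1 ->
  (1 <= np)%N -> (1 <= nq)%N ->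
  #|S1| = np ->
  is_Nin e0 a nq S2 ->
  (0 <= eps)%R -> (eps <= 1 / 2)%R ->
  let l0 := (\max_(x : T) dist_from_set e0 S1 x)%N in
  (l0%:R * (1 - eps) <= (\max_(x : T) dist_from_set e1 S1 x)%:R)%R ->
  ((\max_(x : T) dist_from_set e1 S1 x)%:R <= l0%:R * (1 + eps))%R ->
  (l0%:R * (1 - eps) <= (dist_from_set e1 S1 a)%:R)%R ->
  ((dist_from_set e1 S1 a)%:R <= l0%:R * (1 + eps))%R ->
  S1 :&: S2 != set0 ->
  let delta := inecc e1 a in
  ((forall x y, e1 x y -> e0 x y) /\ ((1 - eps) * l0%:R <= (dist_from_set e0 S1 a)%:R)%R)
  \/ ((forall x y, e0 x y -> e1 x y) /\ ((1 - eps) * (inecc e0 a)%:R <= (inecc e1 a)%:R)%R) ->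
  forall p q : R, (0 < p)%R -> (0 < q)%R -> (p + q = 1)%R ->
    (forall x : T, ((dist_from_set e1 S1 x)%:Z <= Num.floor ((p + 2 * eps) * delta%:R))%R)
    \/ (forall x : T, ((dist_to_set e1 x S2)%:Z <= Num.ceil ((q + 2 * eps) * delta%:R))%R).
Proof.
move=> sc0 sc1 _ _ _ S2_Nin eps_ge0 eps_le l0 _ l1_hi a1_lo _
  /set0Pn[s /setIP[sS1 sS2]] delta hcase p q p_gt0 q_gt0 pq.
have eps_bnd : (0 <= eps <= 1 / 2)%R by rewrite eps_ge0.
have r_ge0 : (0 <= (q + 2 * eps) * delta%:R)%R by rewrite mulr_ge0 //; lra.
have [near|/existsP[x0]] := boolP [forall x, (dist_from_set e1 S1 x)%:Z <=
                                     Num.floor ((p + 2 * eps) * delta%:R)]%R.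
  by left => x; exact: (forallP near).
rewrite -ltNge floor_lt_int -pmulrn => far; right.
case: hcase => [[e10 a0_lo] | [e01 ecc_lo]].
- have far_l0 : ((p + 2 * eps) * delta%:R < (1 + eps) * l0%:R)%R.
    rewrite [(_ * l0%:R)%R]mulrC; apply: (lt_le_trans far) (le_trans _ l1_hi).
    by rewrite ler_nat (leq_bigmax (F := fun y => dist_from_set e1 S1 y)).
  have a0_D : ((1 - eps) * l0%:R <= (dist e0 s a)%:R)%R.
    by apply: (le_trans a0_lo); rewrite ler_nat dist_from_set_le.
  have [D_gt0 gap] := gap_subgraph eps_bnd p_gt0 q_gt0 pq (ler0n _ _) far_l0 a0_D.
  by apply: dist_to_Nin_ceil S2_Nin sS2 e10 (fun _ _ => id) sc1 _ r_ge0 gap; rewrite -(ltr0n R).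
- have far_l0 : ((p + 2 * eps) * delta%:R < l0%:R)%R.
    apply: (lt_le_trans far); rewrite ler_nat (leq_trans (dist_from_set_sub S1 x0 e01 sc0)) //.
    exact: (leq_bigmax (F := fun y => dist_from_set e0 S1 y)).
  have a1_D : ((1 - eps) * l0%:R <= (dist e0 s a)%:R)%R.
    rewrite mulrC; apply: (le_trans a1_lo); rewrite ler_nat.
    exact: leq_trans (dist_from_set_le e1 a sS1) (dist_sub e01 (sc0 s a)).
  have [D_gt0 gap] := gap_supergraph eps_bnd p_gt0 q_gt0 pq (ler0n _ _) far_l0 a1_D ecc_lo.
  by apply: dist_to_Nin_ceil S2_Nin sS2 (fun _ _ => id) e01 sc0 _ r_ge0 gap; rewrite -(ltr0n R).
Qed.
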